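(* Let $\langle S,L,\tau,\ell\rangle$ be a labelled Markov chain. Robust bisimilarity $\simeq$ is a probabilistic bisimulation; in particular it is an equivalence relation, and hence $\simeq\,\subseteq\,\sim$.
   Context: Labelled Markov chain $\langle S,L,\tau,\ell\rangle$: finite state set $S$, finite label set $L$, $\tau:S\to\mathcal{D}(S)$, $\ell:S\to L$, with $|\ell(S)|\ge2$. $\Omega(\mu,\nu)$ = couplings of $\mu,\nu$ (distributions on $S\times S$ with marginals $\mu,\nu$). A probabilistic bisimulation is an equivalence relation $R\subseteq S\times S$ such that for all $(s,t)\in R$, $\ell(s)=\ell(t)$ and there is $\omega\in\Omega(\tau(s),\tau(t))$ with $\mathrm{support}(\omega)\subseteq R$; $s\sim t$ iff $(s,t)\in R$ for some bisimulation $R$. Let $S^2_\Delta=\{(s,s)\}$, $S^2_1=\{(s,t)\mid\ell(s)\ne\ell(t)\}$, $S^2_{0?}=(S\times S)\setminus(S^2_\Delta\cup S^2_1)$. A policy is $P:S\times S\to\mathcal{D}(S\times S)$ with $P(s,t)\in\Omega(\tau(s),\tau(t))$ for $(s,t)\notin S^2_1$ and $P(s,t)$ the point mass at $(s,t)$ for $(s,t)\in S^2_1$; $\mathcal{P}$ is the set of policies and each $P$ induces a Markov chain $\langle S\times S,P\rangle$. Robust bisimilarity: $s\simeq t$ iff there is $P\in\mathcal{P}$ such that $(s,t)$ reaches $S^2_\Delta$ with probability $1$ in $\langle S\times S,P\rangle$. *)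

From mathcomp Require Import all_boot all_order all_algebra.
From mathcomp Require Import reals.
Set Implicit Arguments. Unset Strict Implicit. Unset Printing Implicit Defensive.
Import Order.TTheory GRing.Theory Num.Theory.
Local Open Scope ring_scope.

Section LMC.
Variables (R : realType) (S L : finType).

Definition is_distr (T : finType) (mu : T -> R) : Prop :=
  (forall x, 0 <= mu x) /\ \sum_(x : T) mu x = 1.

Definition is_LMC (tau : S -> S -> R) (lab : S -> L) : Prop :=
  (forall s, is_distr (tau s)) /\ exists s t, lab s != lab t.

Definition coupling (mu nu : S -> R) (omega : S * S -> R) : Prop :=
  is_distr omega /\
  (forall s, \sum_(t : S) omega (s, t) = mu s) /\
  (forall t, \sum_(s : S) omega (s, t) = nu t).

Definition support_in (omega : S * S -> R) (Rel : S -> S -> Prop) : Prop :=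
  forall s t, omega (s, t) != 0 -> Rel s t.

Definition is_equivalence (Rel : S -> S -> Prop) : Prop :=
  (forall s, Rel s s) /\ (forall s t, Rel s t -> Rel t s) /\
  (forall s t u, Rel s t -> Rel t u -> Rel s u).

Definition prob_bisimulation (tau : S -> S -> R) (lab : S -> L)
    (Rel : S -> S -> Prop) : Prop :=
  is_equivalence Rel /\
  forall s t, Rel s t ->
    lab s = lab t /\ exists omega, coupling (tau s) (tau t) omega /\ support_in omega Rel.

Definition bisimilar (tau : S -> S -> R) (lab : S -> L) (s t : S) : Prop :=
  exists Rel, prob_bisimulation tau lab Rel /\ Rel s t.

Definition is_policy (tau : S -> S -> R) (lab : S -> L)
    (P : S * S -> S * S -> R) : Prop :=
  forall x : S * S,
    if lab x.1 != lab x.2 then (forall y, P x y = (y == x)%:R)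
    else coupling (tau x.1) (tau x.2) (P x).

Fixpoint reach_diag_within (P : S * S -> S * S -> R) (n : nat) (x : S * S) : R :=
  if x.1 == x.2 then 1 else
  match n with
  | 0 => 0
  | n'.+1 => \sum_(y : S * S) P x y * reach_diag_within P n' y
  end.

(* x reaches S^2_Delta with probability 1: the probability of the event
   "eventually in S^2_Delta" is the limit (supremum) of the bounded-step
   reachability probabilities, and it equals 1. *)
Definition reaches_diag_as (P : S * S -> S * S -> R) (x : S * S) : Prop :=
  forall eps : R, 0 < eps -> exists n, 1 - eps < reach_diag_within P n x.

Definition robust_bisimilar (tau : S -> S -> R) (lab : S -> L) (s t : S) : Prop :=
  exists P, is_policy tau lab P /\ reaches_diag_as P (s, t).

End LMC.

(* Call (s, t) steerable within X if it can be driven to the diagonal in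
   finitely many steps, each step following a positive-weight pair of a coupling
   of tau s and tau t supported in X.  Every robustly bisimilar pair is steerable
   within robust bisimilarity: follow positive-probability paths of a policy.
   Conversely, if every pair of X is steerable within X, the memoryless policy
   that always takes the first step of a shortest path reaches the diagonal
   from every pair of X within N steps with probability at least delta^N, where
   delta is its least positive transition probability; restarting, the failure
   probability after kN steps is at most (1 - delta^N)^k, so X is contained in
   robust bisimilarity.  Reflexivity, symmetry and transitivity follow by
   applying this to the identity, to the converse relation (transposing the
   couplings) and to the composite relation (gluing couplings along their
   common marginal). *)

From mathcomp Require Import all_boot all_order all_algebra.
From mathcomp Require Import boolp reals normedtype sequences.
From mathcomp Require Import lra.
Import Order.TTheory GRing.Theory Num.Theory numFieldNormedType.Exports.

Set Implicit Arguments.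
Unset Strict Implicit.
Unset Printing Implicit Defensive.

Local Open Scope ring_scope.

Lemma sum_pair (V : nmodType) (I J : finType) (F : I * J -> V) :
  \sum_(p : I * J) F p = \sum_(i : I) \sum_(j : J) F (i, j).
Proof. by rewrite pair_bigA; apply: eq_bigr => -[]. Qed.

Lemma finite_uniform_bound (T : finType) (Q : nat -> T -> Prop) :
  (forall n m x, (n <= m)%N -> Q n x -> Q m x) -> (forall x, exists n, Q n x) ->
  exists N, forall x, Q N x.
Proof.
move=> Qmono Qex.
suff [N HN] : exists N, forall x, x \in enum T -> Q N x.
  by exists N => x; apply: HN; rewrite mem_enum.
elim: (enum T) => [|x r [N HN]]; first by exists 0%N.
have [n Hn] := Qex x; exists (maxn n N) => y; rewrite inE => /predU1P[->|yr].
  exact: Qmono (leq_maxl n N) Hn.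
exact: Qmono (leq_maxr n N) (HN y yr).
Qed.

Lemma exists_exprn_lt (R : realType) (r eps : R) : 0 <= r < 1 -> 0 < eps ->
  exists k, r ^+ k < eps.
Proof.
move=> /andP[r0 r1] eps0; have r1' : `|r| < 1 by rewrite ger0_norm.
have [N _ HN] := cvgr0_norm_lt _ (cvg_expr r1') _ eps0.
by exists N; have := HN N (leqnn N); rewrite /= ger0_norm ?exprn_ge0.
Qed.

Section Distributions.
Variables (R : realType) (T : finType).

Lemma distr_le1 (mu : T -> R) x : is_distr mu -> mu x <= 1.
Proof.
by move=> [mu_ge0 <-]; rewrite (bigD1 x) //= lerDl sumr_ge0.
Qed.

Lemma stochastic_min_pos (P : T -> T -> R) : (forall x, is_distr (P x)) ->
  exists d, [/\ 0 < d, d <= 1 & forall x y, P x y != 0 -> d <= P x y].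
Proof.
move=> P_distr.
pose f (p : T * T) := if P p.1 p.2 != 0 then P p.1 p.2 else 1.
have f_gt0 p : 0 < f p.
  by rewrite /f; case: ifP => [Pp|_]; rewrite ?ltr01 // lt0r Pp (P_distr _).1.
have f_range p : 0 <= f p <= 1.
  by rewrite ltW //= /f; case: ifP => _; rewrite ?distr_le1.
have prod_le1 (Q : pred (T * T)) : \prod_(p | Q p) f p <= 1.
  by apply: prodr_ile1 => p _; exact: f_range.
exists (\prod_p f p); split=> //; first exact: prodr_gt0.
move=> x y Pxy; have fxy : f (x, y) = P x y by rewrite /f /= Pxy.
by rewrite (bigD1 (x, y)) //= fxy ler_piMr ?(P_distr x).1.
Qed.

End Distributions.

Section Couplings.
Variables (R : realType) (S : finType).
Implicit Types (mu nu rho : S -> R) (w : S * S -> R).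

Lemma coupling_of mu nu w : is_distr mu -> (forall p, 0 <= w p) ->
  (forall s, \sum_t w (s, t) = mu s) -> (forall t, \sum_s w (s, t) = nu t) ->
  coupling mu nu w.
Proof.
move=> [_ mu1] w_ge0 wl wr; do !split => //.
by rewrite sum_pair -mu1; apply: eq_bigr => s _; exact: wl.
Qed.

Section Coupling.
Variables (mu nu : S -> R) (w : S * S -> R).
Hypothesis Cw : coupling mu nu w.

Lemma coupling_ge0 p : 0 <= w p.
Proof. by case: Cw => -[]. Qed.

Lemma coupling_distr_l : is_distr mu.
Proof.
case: Cw => -[_ w1] [wl _]; split.
  by move=> s; rewrite -wl; apply: sumr_ge0 => t _; exact: coupling_ge0.
by rewrite -w1 sum_pair; apply: eq_bigr => s _; rewrite wl.
Qed.

Lemma coupling_distr_r : is_distr nu.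
Proof.
case: Cw => -[_ w1] [_ wr]; split.
  by move=> t; rewrite -wr; apply: sumr_ge0 => s _; exact: coupling_ge0.
rewrite -w1 sum_pair exchange_big; by apply: eq_bigr => t _; rewrite wr.
Qed.

Lemma coupling_le_l a b : w (a, b) <= mu a.
Proof.
case: Cw => _ [<- _]; rewrite (bigD1 b) //= lerDl.
by apply: sumr_ge0 => t _; exact: coupling_ge0.
Qed.

Lemma coupling_le_r a b : w (a, b) <= nu b.
Proof.
case: Cw => _ [_ <-]; rewrite (bigD1 a) //= lerDl.
by apply: sumr_ge0 => s _; exact: coupling_ge0.
Qed.

Lemma coupling_neq0_l a b : w (a, b) != 0 -> mu a != 0.
Proof.
move=> wab; rewrite gt_eqF // (lt_le_trans _ (coupling_le_l a b)) //.
by rewrite lt0r wab coupling_ge0.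
Qed.

Lemma coupling_neq0_r a b : w (a, b) != 0 -> nu b != 0.
Proof.
move=> wab; rewrite gt_eqF // (lt_le_trans _ (coupling_le_r a b)) //.
by rewrite lt0r wab coupling_ge0.
Qed.

Lemma coupling_row_neq0 a : mu a != 0 -> exists b, w (a, b) != 0.
Proof.
case: Cw => _ [<- _] /eqP sum_neq0.
have [b /andP[_ wab]] := psumr_neq0P (fun b _ => coupling_ge0 (a, b)) sum_neq0.
by exists b; rewrite gt_eqF.
Qed.

End Coupling.

Definition indep mu nu (p : S * S) : R := mu p.1 * nu p.2.

Lemma coupling_indep mu nu :
  is_distr mu -> is_distr nu -> coupling mu nu (indep mu nu).
Proof.
move=> [mu_ge0 mu1] [nu_ge0 nu1]; apply: coupling_of => //.
- by move=> p; rewrite mulr_ge0.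
- by move=> s; rewrite /indep /= -mulr_sumr nu1 mulr1.
- by move=> t; rewrite /indep /= -mulr_suml mu1 mul1r.
Qed.

Definition diag mu (p : S * S) : R := (p.1 == p.2)%:R * mu p.1.

Lemma coupling_diag mu : is_distr mu -> coupling mu mu (diag mu).
Proof.
move=> [mu_ge0 mu1]; apply: coupling_of => //.
- by move=> p; rewrite mulr_ge0.
- move=> s; rewrite /diag (bigD1 s) //= eqxx mul1r big1 ?addr0 // => t.
  by rewrite eq_sym => /negbTE ->; rewrite mul0r.
- move=> t; rewrite /diag (bigD1 t) //= eqxx mul1r big1 ?addr0 // => s.
  by move=> /negbTE ->; rewrite mul0r.
Qed.

Lemma support_diag mu (X : S -> S -> Prop) :
  (forall s, X s s) -> support_in (diag mu) X.
Proof.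
move=> Xrefl s t; rewrite /diag /=.
by have [->|_] := eqVneq s t; rewrite ?mul0r ?eqxx.
Qed.

Definition transpose w (p : S * S) : R := w (p.2, p.1).

Lemma coupling_transpose mu nu w : coupling mu nu w -> coupling nu mu (transpose w).
Proof.
move=> Cw; have [_ [wl wr]] := Cw; apply: coupling_of => //.
- exact: coupling_distr_r Cw.
- by move=> p; exact: (coupling_ge0 Cw (p.2, p.1)).
Qed.

(* Terms with [nu b = 0] are junk divisions by zero, but then [w1 (a, b) = 0]. *)
Definition glued nu w1 w2 (p : S * S) : R :=
  \sum_b w1 (p.1, b) * w2 (b, p.2) / nu b.

Section Gluing.
Variables (mu nu rho : S -> R) (w1 w2 : S * S -> R).
Hypotheses (C1 : coupling mu nu w1) (C2 : coupling nu rho w2).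

Lemma glued_term_ge0 a b c : 0 <= w1 (a, b) * w2 (b, c) / nu b.
Proof.
rewrite divr_ge0 ?mulr_ge0 ?(coupling_ge0 C1) ?(coupling_ge0 C2) //.
exact: (coupling_distr_r C1).1.
Qed.

Lemma coupling_glued : coupling mu rho (glued nu w1 w2).
Proof.
have [_ [w1l w1r]] := C1; have [_ [w2l w2r]] := C2.
apply: coupling_of; first exact: coupling_distr_l C1.
- by move=> p; apply: sumr_ge0 => b _; exact: glued_term_ge0.
- move=> a; rewrite /glued exchange_big -w1l; apply: eq_bigr => b _ /=.
  rewrite -[RHS]mulr1; under eq_bigr do rewrite mulrAC -mulrA.
  rewrite -!mulr_sumr w2l.
  have [nub|nub] := eqVneq (nu b) 0; last by rewrite mulVf.
  suff -> : w1 (a, b) = 0 by rewrite !mul0r.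
  by apply/eqP/negPn/negP => /(coupling_neq0_r C1); rewrite nub eqxx.
- move=> c; rewrite /glued exchange_big -w2r; apply: eq_bigr => b _ /=.
  under eq_bigr do rewrite -mulrA.
  rewrite -mulr_suml w1r mulrCA; have [nub|nub] := eqVneq (nu b) 0.
    suff -> : w2 (b, c) = 0 by rewrite mul0r.
    by apply/eqP/negPn/negP => /(coupling_neq0_l C2); rewrite nub eqxx.
  by rewrite mulfV ?mulr1.
Qed.

Lemma glued_neq0 a c :
  (glued nu w1 w2 (a, c) != 0) <-> exists b, w1 (a, b) != 0 /\ w2 (b, c) != 0.
Proof.
rewrite /glued /=; split.
  move=> /eqP sum_neq0.
  have [b /andP[_ term_gt0]] :=
    psumr_neq0P (fun b _ => glued_term_ge0 a b c) sum_neq0.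
  by exists b; split; apply: contraTneq term_gt0 => ->; rewrite ?(mul0r, mulr0) ltxx.
move=> [b [wab wbc]]; rewrite psumr_neq0 => [|b' _]; last exact: glued_term_ge0.
apply/hasP; exists b; first exact: mem_index_enum.
rewrite divr_gt0 ?mulr_gt0 ?lt0r ?wab ?wbc ?(coupling_ge0 C1) ?(coupling_ge0 C2) //.
by rewrite (coupling_neq0_r C1 wab) (coupling_distr_r C1).1.
Qed.

End Gluing.
End Couplings.

Section Reachability.
Variables (R : realType) (S : finType) (P : S * S -> S * S -> R).
Hypothesis P_distr : forall x, is_distr (P x).
Local Notation reach := (reach_diag_within P).

Lemma reach_diag n x : x.1 == x.2 -> reach n x = 1.
Proof. by case: n => [|n] /= ->. Qed.

Lemma reach_offdiagS n x :
  x.1 != x.2 -> reach n.+1 x = \sum_y P x y * reach n y.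
Proof. by move=> /negbTE /= ->. Qed.

Lemma reach_ge0 n x : 0 <= reach n x.
Proof.
elim: n x => [|n IH] x /=; case: ifP => // _.
by apply: sumr_ge0 => y _; rewrite mulr_ge0 ?(P_distr x).1.
Qed.

Lemma reach_le1 n x : reach n x <= 1.
Proof.
elim: n x => [|n IH] x /=; case: ifP => // _.
rewrite -(P_distr x).2; apply: ler_sum => y _.
by rewrite ler_piMr ?(P_distr x).1.
Qed.

Lemma reach_leS n x : reach n x <= reach n.+1 x.
Proof.
elim: n x => [|n IH] x; have [xd|xd] := boolP (x.1 == x.2);
  try by rewrite !reach_diag.
  by rewrite (_ : reach 0 x = 0) ?reach_ge0 //= (negbTE xd).
rewrite !reach_offdiagS //; apply: ler_sum => y _.
by rewrite ler_wpM2l ?(P_distr x).1.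
Qed.

Lemma reach_failureS n x : x.1 != x.2 ->
  1 - reach n.+1 x = \sum_y P x y * (1 - reach n y).
Proof.
move=> xd; rewrite reach_offdiagS // -{1}(P_distr x).2 -sumrB.
by apply: eq_bigr => y _; rewrite mulrBr mulr1.
Qed.

Lemma reach_failure_ge n x y : x.1 != x.2 ->
  P x y * (1 - reach n y) <= 1 - reach n.+1 x.
Proof.
move=> xd; rewrite reach_failureS // (bigD1 y) //= lerDl.
by apply: sumr_ge0 => z _; rewrite mulr_ge0 ?(P_distr x).1 ?subr_ge0 ?reach_le1.
Qed.

Lemma reach_failure_add (X : S * S -> Prop) m e :
  (forall x y, X x -> x.1 != x.2 -> P x y != 0 -> X y) ->
  (forall y, X y -> 1 - reach m y <= e) ->
  forall n x, X x -> 1 - reach (n + m) x <= (1 - reach n x) * e.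
Proof.
move=> X_closed fail_m; elim=> [|n IH] x Xx;
  have [xd|xd] := boolP (x.1 == x.2); try by rewrite !reach_diag ?subrr ?mul0r.
  by rewrite /= (negbTE xd) subr0 mul1r fail_m.
rewrite addSn !reach_failureS // mulr_suml; apply: ler_sum => y _.
have [->|Pxy] := eqVneq (P x y) 0; first by rewrite !mul0r.
rewrite -mulrA ler_wpM2l ?(P_distr x).1 //; exact: IH (X_closed x y Xx xd Pxy).
Qed.

Lemma reach_failure_geometric (X : S * S -> Prop) N q :
  (forall x y, X x -> x.1 != x.2 -> P x y != 0 -> X y) ->
  (forall x, X x -> q <= reach N x) ->
  forall k x, X x -> 1 - reach (k * N) x <= (1 - q) ^+ k.
Proof.
move=> X_closed reach_N; elim=> [|k IH] x Xx.
  by rewrite mul0n lerBlDr lerDl reach_ge0.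
rewrite mulSn exprS; apply: le_trans (reach_failure_add X_closed IH N Xx) _.
rewrite ler_wpM2r ?lerD2l ?lerN2 ?reach_N //.
by apply: exprn_ge0; rewrite subr_ge0 (le_trans (reach_N x Xx)) ?reach_le1.
Qed.

Lemma reach_gt0S n x : x.1 != x.2 -> 0 < reach n.+1 x ->
  exists y, P x y != 0 /\ 0 < reach n y.
Proof.
move=> xd; rewrite reach_offdiagS // => /gt_eqF /negbT sum_neq0.
have term_ge0 y : 0 <= P x y * reach n y.
  by rewrite mulr_ge0 ?reach_ge0 ?(P_distr x).1.
have [y /andP[_ term_gt0]] :=
  psumr_neq0P (fun y _ => term_ge0 y) (elimN eqP sum_neq0).
have Pxy : P x y != 0 by apply: contraTneq term_gt0 => ->; rewrite mul0r ltxx.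
have Pxy_gt0 : 0 < P x y by rewrite lt0r Pxy (P_distr x).1.
by exists y; rewrite -(pmulr_rgt0 _ Pxy_gt0).
Qed.

Lemma reaches_diag_succ x y : reaches_diag_as P x -> x.1 != x.2 -> P x y != 0 ->
  reaches_diag_as P y.
Proof.
move=> x_reach xd Pxy eps eps0.
have Pxy_gt0 : 0 < P x y by rewrite lt0r Pxy (P_distr x).1.
have [n reach_n] := x_reach _ (mulr_gt0 eps0 Pxy_gt0); exists n.
have := reach_failure_ge n y xd; have := reach_leS n x => reach_mono fail_y.
have : P x y * (1 - reach n y) < P x y * eps by lra.
by rewrite ltr_pM2l //; lra.
Qed.

End Reachability.

Section Policies.
Variables (R : realType) (S L : finType) (tau : S -> S -> R) (lab : S -> L).
Variable P : S * S -> S * S -> R.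
Hypothesis P_policy : is_policy tau lab P.

Lemma policy_distr x : is_distr (P x).
Proof.
have := P_policy x; case: ifP => [_ Px|_ [] //]; split.
  by move=> y; rewrite Px ler0n.
by rewrite (bigD1 x) //= Px eqxx big1 ?addr0 // => y /negbTE; rewrite Px => ->.
Qed.

Lemma policy_coupling x :
  lab x.1 = lab x.2 -> coupling (tau x.1) (tau x.2) (P x).
Proof. by have := P_policy x => /[swap] ->; rewrite eqxx. Qed.

Lemma reach_lab_neq n x : lab x.1 != lab x.2 -> reach_diag_within P n x = 0.
Proof.
move=> labx; have Px := P_policy x; rewrite labx in Px.
have xd : x.1 != x.2 by apply: contraNneq labx => ->.
elim: n => [|n IH] /=; rewrite (negbTE xd) //.
rewrite (bigD1 x) //= Px eqxx mul1r IH add0r big1 // => y /negbTE yx.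
by rewrite Px yx mul0r.
Qed.

Lemma reaches_diag_lab x : reaches_diag_as P x -> lab x.1 = lab x.2.
Proof.
have [//|labx] := eqVneq (lab x.1) (lab x.2) => /(_ 1 ltr01) [n].
by rewrite reach_lab_neq // subrr ltxx.
Qed.

End Policies.

Section Steering.
Variables (R : realType) (S L : finType) (tau : S -> S -> R) (lab : S -> L).

Inductive steerable (X : S -> S -> Prop) : nat -> S -> S -> Prop :=
| steerable_refl n s : steerable X n s s
| steerable_step n s t w a b :
    lab s = lab t -> coupling (tau s) (tau t) w -> support_in w X ->
    w (a, b) != 0 -> steerable X n a b -> steerable X n.+1 s t.

Lemma steerable_le X n m s t :
  (n <= m)%N -> steerable X n s t -> steerable X m s t.
Proof.
move=> + st; elim: st m => [{}n {}s|{}n {}s {}t w a b labst Cw suppw wab _ IH] m.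
  move=> _; exact: steerable_refl.
case: m => [|m] // le_nm.
exact: steerable_step labst Cw suppw wab (IH m le_nm).
Qed.

Lemma steerable0 X s t : steerable X 0 s t -> s = t.
Proof. by move=> st; inversion st. Qed.

Lemma steerable_lab X n s t : steerable X n s t -> lab s = lab t.
Proof. by case. Qed.

Lemma steerable_sub X Y n s t : (forall a b, X a b -> Y a b) ->
  steerable X n s t -> steerable Y n s t.
Proof.
move=> XY; elim=> [{}n {}s|{}n {}s {}t w a b labst Cw suppw wab _ IH].
  exact: steerable_refl.
by apply: steerable_step labst Cw _ wab IH => c d /suppw /XY.
Qed.

Lemma steerable_sym X n s t :
  steerable X n s t -> steerable (fun a b => X b a) n t s.
Proof.
elim=> [{}n {}s|{}n {}s {}t w a b labst Cw suppw wab _ IH].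
  exact: steerable_refl.
apply: (steerable_step (esym labst) (coupling_transpose Cw)) IH => //.
by move=> c d /suppw.
Qed.

Lemma steerableS_neq X n s t : steerable X n.+1 s t -> s != t ->
  exists w a b, [/\ coupling (tau s) (tau t) w, support_in w X, w (a, b) != 0
                  & steerable X n a b].
Proof.
move=> st; inversion st as [k s' k_eq s_eq st_eq|k s' t' w a b _ Cw suppw wab st_ab].
  by rewrite eqxx.
by move=> _; exists w, a, b.
Qed.

(* The first step of a shortest steering path serves every bound [k.+1]. *)
Lemma steerable_best_step X n s t : steerable X n s t -> s != t ->
  exists w, [/\ coupling (tau s) (tau t) w, support_in w X &
    forall k, steerable X k.+1 s t -> exists y, w y != 0 /\ steerable X k y.1 y.2].
Proof.
move=> st st_neq.
have ex_n : exists n, `[< steerable X n s t >] by exists n; apply/asboolP.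
case: (ex_minnP ex_n) => -[/asboolP /steerable0 st_eq|m /asboolP st_m m_min].
  by rewrite st_eq eqxx in st_neq.
have [w [a [b [Cw suppw wab st_ab]]]] := steerableS_neq st_m st_neq.
exists w; split=> // k st_k; exists (a, b); split=> //.
by apply: steerable_le st_ab; rewrite -ltnS m_min //; apply/asboolP.
Qed.

End Steering.

Section Soundness.
Variables (R : realType) (S L : finType) (tau : S -> S -> R) (lab : S -> L).
Hypothesis tau_distr : forall s, is_distr (tau s).
Variable X : S -> S -> Prop.
Hypothesis X_steerable : forall s t, X s t -> exists n, steerable tau lab X n s t.

Definition steering_step (x : S * S) (w : S * S -> R) : Prop :=
  coupling (tau x.1) (tau x.2) w /\
  (X x.1 x.2 -> x.1 != x.2 -> support_in w X /\
    forall n, steerable tau lab X n.+1 x.1 x.2 ->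
      exists y, w y != 0 /\ steerable tau lab X n y.1 y.2).

Lemma steering_step_exists x : exists w, steering_step x w.
Proof.
case: (pselect (X x.1 x.2 /\ x.1 != x.2)) => [[Xx xd]|not_Xx]; last first.
  exists (indep (tau x.1) (tau x.2)); split; first exact: coupling_indep.
  by move=> Xx xd; case: not_Xx.
have [n st] := X_steerable Xx.
by have [w [Cw suppw progress]] := steerable_best_step st xd; exists w.
Qed.

Definition steering_policy (x : S * S) : S * S -> R :=
  if lab x.1 != lab x.2 then fun y => (y == x)%:R
  else sval (cid (steering_step_exists x)).

Lemma steering_policy_step x :
  lab x.1 = lab x.2 -> steering_step x (steering_policy x).
Proof. by rewrite /steering_policy => ->; rewrite eqxx; exact: svalP. Qed.

Lemma steering_policy_is_policy : is_policy tau lab steering_policy.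
Proof.
move=> x; case: ifPn => [labx|/negPn /eqP labx].
  by rewrite /steering_policy labx.
exact: (steering_policy_step labx).1.
Qed.

Local Notation Pol := steering_policy.
Local Notation reach := (reach_diag_within steering_policy).

Lemma steering_policy_X x : X x.1 x.2 -> x.1 != x.2 ->
  support_in (Pol x) X /\
  forall n, steerable tau lab X n.+1 x.1 x.2 ->
    exists y, Pol x y != 0 /\ steerable tau lab X n y.1 y.2.
Proof.
move=> Xx xd; have [n /steerable_lab labx] := X_steerable Xx.
exact: (steering_policy_step labx).2.
Qed.

Lemma steering_reach_lower d n x : 0 <= d <= 1 ->
  (forall x y, Pol x y != 0 -> d <= Pol x y) ->
  X x.1 x.2 -> steerable tau lab X n x.1 x.2 -> d ^+ n <= reach n x.
Proof.
move=> /andP[d0 d1] d_min; have Pol_distr := policy_distr steering_policy_is_policy.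
elim: n x => [|n IH] x Xx st.
  by rewrite expr0 reach_diag //; apply/eqP; exact: steerable0 st.
have [xd|xd] := boolP (x.1 == x.2); first by rewrite reach_diag // exprn_ile1.
have [supp /(_ n st) [y [Pxy st_y]]] := steering_policy_X Xx xd.
have Xy : X y.1 y.2 by case: y Pxy {st_y} => a b /supp.
rewrite reach_offdiagS // (bigD1 y) //= exprS ler_wpDr //.
  by apply: sumr_ge0 => z _; rewrite mulr_ge0 ?reach_ge0 ?(Pol_distr x).1.
by rewrite ler_pM ?exprn_ge0 ?d_min ?IH.
Qed.

Lemma robust_of_steerable s t : X s t -> robust_bisimilar tau lab s t.
Proof.
move=> Xst; exists Pol; split; first exact: steering_policy_is_policy.
have Pol_distr := policy_distr steering_policy_is_policy.
have [N st_N] : exists N, forall x, X x.1 x.2 -> steerable tau lab X N x.1 x.2.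
  apply: finite_uniform_bound => [n m x le_nm stn /stn|x]; first exact: steerable_le.
  case: (pselect (X x.1 x.2)) => [/X_steerable [n st]|not_Xx]; first by exists n.
  by exists 0%N.
have [d [d0 d1 d_min]] := stochastic_min_pos Pol_distr.
have reach_N x : X x.1 x.2 -> d ^+ N <= reach N x.
  by move=> Xx; apply: steering_reach_lower d_min Xx (st_N x Xx); rewrite ltW.
have X_closed x y : X x.1 x.2 -> x.1 != x.2 -> Pol x y != 0 -> X y.1 y.2.
  by move=> Xx xd; case: y => a b /(steering_policy_X Xx xd).1.
have fail_kN := reach_failure_geometric Pol_distr X_closed reach_N.
have q_range : 0 <= 1 - d ^+ N < 1.
  by rewrite gtrBl exprn_gt0 // andbT subr_ge0 exprn_ile1 // ltW.
move=> eps eps0; have [k qk] := exists_exprn_lt q_range eps0.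
by exists (k * N)%N; have := fail_kN k (s, t) Xst; lra.
Qed.

End Soundness.

Section RobustBisimilarity.
Variables (R : realType) (S L : finType) (tau : S -> S -> R) (lab : S -> L).
Hypothesis tau_distr : forall s, is_distr (tau s).
Local Notation W := (robust_bisimilar tau lab).
Local Notation steerable := (steerable tau lab).

Lemma robust_refl s : W s s.
Proof.
apply: (robust_of_steerable tau_distr (X := fun a b => a = b)) => // a _ <-.
by exists 0%N; exact: steerable_refl.
Qed.

Lemma reaches_diag_steerable P n x : is_policy tau lab P -> reaches_diag_as P x ->
  0 < reach_diag_within P n x ->
  steerable (fun a b => reaches_diag_as P (a, b)) n x.1 x.2.
Proof.
move=> P_policy; have P_distr := policy_distr P_policy.
elim: n x => [|n IH] x Px_reach reach_n; have [/eqP <-|xd] := boolP (x.1 == x.2);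
  try exact: steerable_refl.
  by rewrite /= (negbTE xd) ltxx in reach_n.
have [y [Pxy reach_y]] := reach_gt0S P_distr xd reach_n.
have labx := reaches_diag_lab P_policy Px_reach.
have succ z : P x z != 0 -> reaches_diag_as P z.
  exact: (reaches_diag_succ P_distr Px_reach xd).
have st_y := IH y (succ y Pxy) reach_y.
apply: (steerable_step labx (policy_coupling P_policy labx) _ _ st_y).
  by move=> a b /succ.
by case: y Pxy {reach_y st_y}.
Qed.

Lemma robust_steerable s t : W s t -> exists n, steerable W n s t.
Proof.
move=> [P [P_policy P_reach]].
have [n] := P_reach 1 ltr01; rewrite subrr => reach_n.
exists n; apply: steerable_sub (reaches_diag_steerable P_policy P_reach reach_n).
by move=> a b ab_reach; exists P.
Qed.

Lemma robust_step s t : W s t ->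
  lab s = lab t /\ exists w, coupling (tau s) (tau t) w /\ support_in w W.
Proof.
move=> [P [P_policy P_reach]].
have labst : lab s = lab t := reaches_diag_lab P_policy P_reach.
split=> //; have [<-|st] := eqVneq s t.
  exists (diag (tau s)); split; first exact: coupling_diag.
  exact: support_diag robust_refl.
exists (P (s, t)); split; first exact: (policy_coupling P_policy (x := (s, t))).
move=> a b Pab; exists P; split=> //.
exact: (reaches_diag_succ (policy_distr P_policy) P_reach st Pab).
Qed.

Lemma robust_sym s t : W s t -> W t s.
Proof.
apply: (robust_of_steerable tau_distr (X := fun a b => W b a)).
by move=> a b /robust_steerable [n st]; exists n; exact: steerable_sym.
Qed.

(* Glue each step of the path with a coupling witnessing [W] at the second
   component. *)
Lemma steerable_robust_comp n s t u : steerable W n s t -> W t u ->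
  exists m, steerable (fun a c => exists b, W a b /\ W b c) m s u.
Proof.
move=> st; elim: st u => [{}n {}s|{}n {}s {}t w a b labst Cw suppw wab _ IH] u.
  move=> /robust_steerable [m st]; exists m; apply: steerable_sub st => a c Wac.
  by exists a; split; first exact: robust_refl.
move=> /robust_step [labtu [w' [Cw' suppw']]].
have [c wbc] := coupling_row_neq0 Cw' (coupling_neq0_r Cw wab).
have [m st_m] := IH c (suppw' _ _ wbc); exists m.+1.
apply: (steerable_step (etrans labst labtu) (coupling_glued Cw Cw')) st_m.
  move=> x z /(glued_neq0 Cw Cw') [y [wxy wyz]].
  by exists y; split; [exact: suppw | exact: suppw'].
by apply/(glued_neq0 Cw Cw'); exists b.
Qed.

Lemma robust_trans s t u : W s t -> W t u -> W s u.
Proof.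
move=> Wst Wtu; pose WW a c := exists b, W a b /\ W b c.
apply: (robust_of_steerable tau_distr (X := WW)); last by exists t.
move=> a c [b [Wab Wbc]]; have [n st] := robust_steerable Wab.
exact: steerable_robust_comp st Wbc.
Qed.

Lemma robust_bisimulation : prob_bisimulation tau lab W.
Proof.
split; last exact: robust_step.
split; first exact: robust_refl.
by split; [exact: robust_sym | exact: robust_trans].
Qed.

End RobustBisimilarity.

Theorem lemma1 (R : realType) (S L : finType) (tau : S -> S -> R) (lab : S -> L)
    (HM : is_LMC tau lab) :
  prob_bisimulation tau lab (robust_bisimilar tau lab) /\
  (forall s t, robust_bisimilar tau lab s t -> bisimilar tau lab s t).
Proof.
have W_bisim := robust_bisimulation lab HM.1.
by split=> // s t Wst; exists (robust_bisimilar tau lab).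
Qed.
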